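(* Let $\beta$ be a positive integer and $c_0>0$. There exist $\lambda=\lambda_{\beta,c_0}\in(0,\frac12)$ and $n_0$ such that for all $n\ge n_0$ and all $p$ with $(1+c_0)\frac{\log n}{n}\le p\le\frac12$, if $A$ is an $n\times n$ random matrix with i.i.d. Bernoulli$(p)$ entries then $$\mathbb{P}\{|\mathscr L_A(\lambda pn)|\ge\beta+1\}\le\big((1-p)^n n\big)^{\beta+3/4}.$$
   Context: For real $k\ge0$, $\mathscr L_A(k)$ is the set of column indices $j$ such that the $j$-th column of $A$ has at most $k$ nonzero entries. Bernoulli$(p)$ entries equal $1$ w.p. $p$ and $0$ otherwise. *)

From HB Require Import structures.
From mathcomp Require Import all_boot all_order all_algebra.
From mathcomp Require Import all_classical all_reals all_analysis.
From mathcomp Require Import Rstruct Rstruct_topology.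
From Stdlib Require Rdefinitions.
Notation R := Rdefinitions.R.
Set Implicit Arguments. Unset Strict Implicit. Unset Printing Implicit Defensive.
Import Order.TTheory GRing.Theory Num.Theory.
Local Open Scope ring_scope.

(* L_A(k): column indices j such that column j of A has at most k nonzero
   entries (entries are 0/1, encoded as bool; true = 1). *)
Definition Lset (n : nat) (A : 'M[bool]_n) (k : R) : {set 'I_n} :=
  [set j : 'I_n | (#|[set i : 'I_n | A i j]|%:R <= k)%R].

(* Probability that an n x n matrix with i.i.d. Bernoulli(p) entries
   satisfies the (decidable) event E: exact finite sum over all 0/1 matrices. *)
Definition bern_prob (n : nat) (p : R) (E : pred 'M[bool]_n) : R :=
  \sum_(A : 'M[bool]_n | E A)
     \prod_(i < n) \prod_(j < n) (if A i j then p else 1 - p).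

From HB Require Import structures.
From mathcomp Require Import all_boot all_order all_algebra.
From mathcomp Require Import all_classical all_reals all_analysis.
From mathcomp Require Import Rstruct Rstruct_topology.
From mathcomp Require Import ring lra.
Set Implicit Arguments. Unset Strict Implicit. Unset Printing Implicit Defensive.
Import Order.TTheory GRing.Theory Num.Theory.
Local Open Scope ring_scope.

(* The proof is a first-moment (Chernoff-type) argument.  For 0 < t <= 1 the
   column tilt  c t^(number of nonzeros in column j),  with c = t^(-K), is at
   least 1 on every column having at most K nonzeros.  So if at least k such
   columns exist, the sum over k-sets S of columns of the product of the
   tilts of S is at least 1 (Markov), while by independence of the entries its
   expectation is exactly C(n,k) (c (1-p+pt)^n)^k.  With C(n,k) <= n^k this
   gives  P{|L_A(K)| >= k} <= X^k,  X = n c (1-p+pt)^n.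
   The remaining work is real analysis: for K = 2t^2 pn one has
   ln X <= ln q + 4tpn with q = (1-p)^n n, and the lower bound on p gives
   ln q <= -(c0/(1+c0)) pn; taking t = c0/(1+c0)/(16(beta+1)) then turns
   X^(beta+1) into at most q^(beta+3/4). *)

(* Summing a product of entrywise factors over all 0/1 matrices factorises
   entry by entry: distribute the product of the sums over bool and identify
   functions on index pairs with matrices. *)
Lemma sum_mx_prod (S : comPzSemiRingType) m n (F : 'I_m -> 'I_n -> bool -> S) :
  \sum_(A : 'M[bool]_(m, n)) \prod_i \prod_j F i j (A i j) =
  \prod_i \prod_j (F i j true + F i j false).
Proof.
rewrite pair_bigA /=.
rewrite (eq_bigr (fun x => \sum_(b : bool) F x.1 x.2 b)); last first.
  by move=> x _; rewrite big_bool.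
rewrite (bigA_distr_bigA (fun x b => F x.1 x.2 b)) /=.
rewrite (reindex (fun f : {ffun 'I_m * 'I_n -> bool} => \matrix_(i, j) f (i, j))) /=.
  apply: eq_bigr => f _; rewrite pair_bigA /=; apply: eq_bigr => -[i j] _.
  by rewrite mxE.
exists (fun A : 'M[bool]_(m, n) => [ffun x : 'I_m * 'I_n => A x.1 x.2]).
  by move=> f _; apply/ffunP => -[i j]; rewrite ffunE mxE.
by move=> A _; apply/matrixP => i j; rewrite mxE ffunE.
Qed.

Definition bern_weight n (p : R) (A : 'M[bool]_n) : R :=
  \prod_(i < n) \prod_(j < n) (if A i j then p else 1 - p).

Lemma bern_weight_ge0 n (p : R) (A : 'M[bool]_n) :
  0 <= p <= 1 -> 0 <= bern_weight p A.
Proof.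
case/andP=> p0 p1; apply: prodr_ge0 => i _; apply: prodr_ge0 => j _.
by case: (A i j); rewrite ?subr_ge0.
Qed.

Lemma bern_expect_prod n (p : R) (f : 'I_n -> 'I_n -> bool -> R) :
  \sum_(A : 'M[bool]_n) bern_weight p A * \prod_i \prod_j f i j (A i j) =
  \prod_i \prod_j (p * f i j true + (1 - p) * f i j false).
Proof.
have /= <- := sum_mx_prod (fun i j b => (if b then p else 1 - p) * f i j b).
apply: eq_bigr => A _; rewrite -big_split; apply: eq_bigr => i _.
by rewrite -big_split; apply: eq_bigr => j _.
Qed.

Lemma bern_prob_le_expect n (p : R) (E : pred 'M[bool]_n) (G : 'M[bool]_n -> R) :
  0 <= p <= 1 -> (forall A, 0 <= G A) -> (forall A, E A -> 1 <= G A) ->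
  bern_prob p E <= \sum_A bern_weight p A * G A.
Proof.
move=> p01 G0 EG; rewrite /bern_prob big_mkcond /=; apply: ler_sum => A _.
have w0 := bern_weight_ge0 A p01.
case: ifP => [/EG G1|_]; last exact: mulr_ge0.
by rewrite -[X in X <= _]mulr1; apply: ler_wpM2l.
Qed.

Definition col_count n (A : 'M[bool]_n) (j : 'I_n) : nat := #|[set i | A i j]|.

Lemma tilt_ge1 (t K : R) (x : nat) : 0 < t <= 1 -> x%:R <= K ->
  1 <= expR (- K * ln t) * t ^+ x.
Proof.
move=> /andP[t0 t1] xK.
have -> : t ^+ x = expR (x%:R * ln t).
  by rewrite -[LHS]lnK ?posrE ?exprn_gt0 // lnXn // mulr_natl.
rewrite -exp.expRD; apply: le_trans (expR_ge1Dx _); rewrite lerDl -mulrDl.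
by apply: mulr_le0; [rewrite addrC subr_le0 | exact: ln_le0].
Qed.

Definition tilt_weight n (c t : R) (k : nat) (A : 'M[bool]_n) : R :=
  \sum_(S : {set 'I_n} | #|S| == k) \prod_(j in S) (c * t ^+ col_count A j).

Lemma tilt_weight_ge0 n (c t : R) k (A : 'M[bool]_n) :
  0 <= c -> 0 <= t -> 0 <= tilt_weight c t k A.
Proof.
move=> c0 t0; apply: sumr_ge0 => S _; apply: prodr_ge0 => j _.
by rewrite mulr_ge0 ?exprn_ge0.
Qed.

(* If at least k columns have at most K nonzeros, any k of them form a set
   whose tilt product is at least 1, so the tilted weight is at least 1. *)
Lemma tilt_weight_ge1 n (t K : R) k (A : 'M[bool]_n) :
  0 < t <= 1 -> (k <= #|Lset A K|)%N ->
  1 <= tilt_weight (expR (- K * ln t)) t k A.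
Proof.
move=> t01 kL; have t0 : 0 <= t by case/andP: t01 => /ltW.
have c0 : 0 <= expR (- K * ln t) := ltW (expR_gt0 _).
have /card_gt0P[S] :
    (0 < #|[set S : {set 'I_n} | S \subset Lset A K & #|S| == k]|)%N.
  by rewrite cards_draws bin_gt0.
rewrite inE => /andP[/fintype.subsetP SL cardS].
rewrite /tilt_weight (bigD1 S) //=.
have S_ge1 : 1 <= \prod_(j in S) (expR (- K * ln t) * t ^+ col_count A j).
  apply: (big_ind (fun x => 1 <= x)) => [//|x y x1 y1|j /SL].
    by rewrite -[1]mulr1 ler_pM.
  by rewrite inE => jK; apply: tilt_ge1.
apply: le_trans S_ge1 _; rewrite lerDl; apply: sumr_ge0 => S' _.
by apply: prodr_ge0 => j _; rewrite mulr_ge0 ?exprn_ge0.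
Qed.

Lemma col_tilt_prod n (t : R) (A : 'M[bool]_n) (S : {set 'I_n}) :
  \prod_(j in S) t ^+ col_count A j =
  \prod_i \prod_j (if A i j && (j \in S) then t else 1).
Proof.
rewrite exchange_big /= [LHS]big_mkcond /=; apply: eq_bigr => j _.
case: (j \in S); last by rewrite big1 // => i _; rewrite andbF.
rewrite /col_count -prodr_const [LHS]big_mkcond /=.
by apply: eq_bigr => i _; rewrite inE andbT.
Qed.

(* Expected tilt product of a fixed set S of columns: each of the #|S| n
   entries of these columns contributes an independent factor 1 - p + p t. *)
Lemma bern_expect_tilt n (p c t : R) (S : {set 'I_n}) :
  \sum_A bern_weight p A * \prod_(j in S) (c * t ^+ col_count A j) =
  c ^+ #|S| * (1 - p + p * t) ^+ (#|S| * n).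
Proof.
have split_c A : \prod_(j in S) (c * t ^+ col_count A j) =
    c ^+ #|S| * \prod_i \prod_j (if A i j && (j \in S) then t else 1).
  by rewrite big_split /= prodr_const col_tilt_prod.
under eq_bigr => A _ do rewrite split_c mulrCA.
rewrite -mulr_sumr (bern_expect_prod p (fun i j b => if b && (j \in S) then t else 1)) /=.
congr (_ * _).
have row : \prod_j (p * (if j \in S then t else 1) + (1 - p) * 1) =
    (1 - p + p * t) ^+ #|S|.
  rewrite -prodr_const [RHS]big_mkcond /=; apply: eq_bigr => j _.
  by case: (j \in S); lra.
by rewrite (eq_bigr _ (fun i _ => row)) prodr_const card_ord -exprM.
Qed.

Lemma bin_le_expn n k : ('C(n, k) <= n ^ k)%N.
Proof.
apply: leq_trans (_ : 'C(n, k) * k`! <= _)%N; first by rewrite leq_pmulr ?fact_gt0.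
rewrite bin_ffact ffact_prod.
apply: leq_trans (_ : \prod_(i < k) n <= _)%N.
  by apply: leq_prod => i _; exact: leq_subr.
by rewrite prod_nat_const card_ord.
Qed.

Lemma sparse_columns_tail n (p t K : R) k : 0 <= p <= 1 -> 0 < t <= 1 ->
  bern_prob p (fun A : 'M[bool]_n => (k <= #|Lset A K|)%N) <=
  (n%:R * expR (- K * ln t) * (1 - p + p * t) ^+ n) ^+ k.
Proof.
move=> p01 t01; set c := expR (- K * ln t); set Y := 1 - p + p * t.
have c0 : 0 <= c := ltW (expR_gt0 _).
have t0 : 0 <= t by case/andP: t01 => /ltW.
have Y0 : 0 <= Y by rewrite /Y; case/andP: p01 => p0 p1; nra.
apply: le_trans (bern_prob_le_expect (G := tilt_weight c t k) p01 _ _) _.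
- by move=> A; apply: tilt_weight_ge0.
- by move=> A; apply: tilt_weight_ge1.
have -> : \sum_(A : 'M[bool]_n) bern_weight p A * tilt_weight c t k A =
    'C(n, k)%:R * (c ^+ k * Y ^+ (k * n)).
  under eq_bigr => A _ do rewrite /tilt_weight mulr_sumr.
  rewrite exchange_big /= (eq_bigr (fun=> c ^+ k * Y ^+ (k * n))); last first.
    by move=> S /eqP <-; apply: bern_expect_tilt.
  rewrite (eq_bigl (fun S => S \in [set S : {set 'I_n} | #|S| == k])); last first.
    by move=> S /=; rewrite inE.
  by rewrite sumr_const card_draws card_ord mulr_natl.
rewrite !exprMn mulnC exprM -natrX mulrA ler_wpM2r ?exprn_ge0 //.
by rewrite ler_wpM2r ?exprn_ge0 // ler_nat bin_le_expn.
Qed.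

Lemma ln_tilt_le (p t : R) : 0 <= p <= 1 / 2 -> 0 <= t ->
  ln (1 - p + p * t) <= ln (1 - p) + 2 * p * t.
Proof.
move=> /andP[p0 p1] t0; have q0 : 0 < 1 - p by lra.
set u := p * t / (1 - p).
have u0 : 0 <= u by rewrite /u divr_ge0 ?mulr_ge0 // ltW.
have -> : 1 - p + p * t = (1 - p) * (1 + u) by rewrite /u; field; rewrite gt_eqF.
rewrite lnM ?posrE //; last by lra.
rewrite lerD2l; apply: le_trans (le_ln1Dx _) _; first by lra.
have : 0 <= p * t * (1 - 2 * p) by rewrite !mulr_ge0 //; lra.
by rewrite /u ler_pdivrMr //; lra.
Qed.

Lemma ln_first_moment_le n (p t : R) : (0 < n)%N -> 0 <= p <= 1 / 2 -> 0 < t ->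
  ln (n%:R * expR (- (2 * t ^+ 2 * p * n%:R) * ln t) * (1 - p + p * t) ^+ n)
  <= ln ((1 - p) ^+ n * n%:R) + 4 * t * p * n%:R.
Proof.
move=> n0 p01 t0; set N : R := n%:R; have N0 : 0 < N by rewrite ltr0n.
have /andP[p0 p1] := p01; have q0 : 0 < 1 - p by lra.
have pt0 : 0 <= p * t by rewrite mulr_ge0 // ltW.
have Y0 : 0 < 1 - p + p * t by lra.
have tilt_cost : - (2 * t ^+ 2 * p * N) * ln t <= 2 * t * p * N.
  have K0 : 0 <= 2 * t ^+ 2 * p * N by rewrite !mulr_ge0 ?exprn_ge0 // ltW.
  have neg_ln : - ln t <= t^-1.
    by rewrite -lnV ?posrE //; apply/ltW/ln_sublinear; rewrite invr_gt0.
  have := ler_wpM2l K0 neg_ln.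
  have -> : 2 * t ^+ 2 * p * N * t^-1 = 2 * t * p * N by field; rewrite gt_eqF.
  by rewrite mulrN mulNr.
have entries := ler_wpM2r (ltW N0) (ln_tilt_le p01 (ltW t0)).
set e := - _ * ln t in tilt_cost *.
have ->: ln (N * expR e * (1 - p + p * t) ^+ n) =
    ln N + e + ln (1 - p + p * t) * N.
  rewrite lnM ?posrE ?exprn_gt0 ?mulr_gt0 ?expR_gt0 //.
  by rewrite lnM ?posrE ?expR_gt0 // expRK lnXn // mulr_natr.
rewrite lnM ?posrE ?exprn_gt0 // lnXn // -mulr_natr -/N.
lra.
Qed.

Lemma ln_q_le n (p c0 : R) : (0 < n)%N -> 0 < c0 -> p < 1 ->
  (1 + c0) * ln n%:R / n%:R <= p ->
  ln ((1 - p) ^+ n * n%:R) <= - (c0 / (1 + c0) * p * n%:R).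
Proof.
move=> n0 c0_gt0 p1 hp; set N : R := n%:R; have N0 : 0 < N by rewrite ltr0n.
have c1 : 0 < 1 + c0 by lra.
have lnN : ln N <= p * N / (1 + c0).
  by rewrite ler_pdivlMr // mulrC -ler_pdivrMr.
have ln1p : ln (1 - p) <= - p by apply: le_ln1Dx; lra.
have entries := ler_wpM2r (ltW N0) ln1p.
have split_a : c0 / (1 + c0) * p * N = p * N - p * N / (1 + c0).
  by field; rewrite gt_eqF.
rewrite lnM ?posrE ?exprn_gt0 ?subr_gt0 // lnXn ?subr_gt0 // -mulr_natr -/N.
rewrite split_a; lra.
Qed.

Lemma expn_le_powR (X q d : R) (k : nat) : 0 < X -> 0 < q ->
  ln X <= ln q + d -> 4 * k%:R * d <= - ln q ->
  X ^+ k <= q `^ (k%:R - 1 / 4).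
Proof.
move=> X0 q0 hX hq.
rewrite /powR gt_eqF // -[X ^+ k]lnK ?posrE ?exprn_gt0 // ler_expR lnXn //.
have := ler_wpM2l (ler0n R k) hX; rewrite -mulr_natr; lra.
Qed.

(* Proposition 4.6, with lambda = 2 t^2 for t = c0/(1+c0)/(16(beta+1)). *)
Theorem proposition4p6 (beta : nat) (c0 : R) :
  (0 < beta)%N -> 0 < c0 ->
  exists lambda : R, 0 < lambda < 1 / 2 /\
  exists n0 : nat, forall n : nat, (n0 <= n)%N ->
  forall p : R,
    (1 + c0) * ln (n%:R : R) / n%:R <= p <= 1 / 2 ->
    bern_prob p (fun A : 'M[bool]_n =>
                   (beta.+1 <= #|Lset A (lambda * p * n%:R)%R|)%N)
      <= ((1 - p) ^+ n * n%:R) `^ (beta%:R + 3 / 4).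
Proof.
move=> _ c0_gt0; set k : R := beta.+1%:R; set a := c0 / (1 + c0).
set t := a / (16 * k).
have k1 : 1 <= k by rewrite ler1n.
have a01 : 0 < a < 1 by rewrite /a ltr_pdivrMr ?divr_gt0 //=; lra.
have t_a : 16 * k * t = a by rewrite /t mulrC mulfVK // gt_eqF //; lra.
have t01 : 0 < t < 1 / 16 by nra.
have /andP[t0 t_lt] := t01.
exists (2 * t ^+ 2); split; first by apply/andP; split; nra.
exists 1%N => n n_gt0 p /andP[p_lb p_ub].
have p0 : 0 <= p.
  by apply: le_trans p_lb; rewrite !mulr_ge0 ?invr_ge0 ?ln_ge0 ?ler1n //; lra.
have N0 : 0 < n%:R :> R by rewrite ltr0n.
have p01 : 0 <= p <= 1 by apply/andP; split; lra.
have t_le1 : 0 < t <= 1 by apply/andP; split; lra.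
have Y0 : 0 < 1 - p + p * t by have := mulr_ge0 p0 (ltW t0); lra.
apply: le_trans (@sparse_columns_tail n p t _ beta.+1 p01 t_le1) _.
have -> : beta%:R + 3 / 4 = k - 1 / 4 :> R by rewrite /k -natr1; lra.
apply: (expn_le_powR (d := 4 * t * p * n%:R)).
- by rewrite mulr_gt0 ?exprn_gt0 // mulr_gt0 ?expR_gt0.
- by rewrite mulr_gt0 ?exprn_gt0 //; lra.
- by apply: ln_first_moment_le => //; apply/andP; split.
- apply: le_trans (_ : _ <= a * p * n%:R) _; first by rewrite -t_a; lra.
  by rewrite -lerN2 opprK; apply: ln_q_le => //; lra.
Qed.
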